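(* For every $n\ge1$, the infimum of the worst-case expected approximation ratio over all randomized monotone, task-independent, scale-free (MIS) task allocation algorithms for two machines and $n$ tasks equals $\inf_{\mathbb{P}\in\mathcal{P}_n}R_n(\mathbb{P})$, the infimum of the worst-case expected approximation ratio over the algorithms $\mathcal{A}^{\mathbb{P}}$, $\mathbb{P}\in\mathcal{P}_n$.
   Context: Scheduling on two machines with $n$ tasks. A processing-time matrix is $T\in\mathbb{R}_{++}^{2\times n}$; an allocation is $X\in\{0,1\}^{2\times n}$ with $X_{1j}+X_{2j}=1$; makespan $M(X,T)=\max_{i\in\{1,2\}}\sum_jX_{ij}T_{ij}$; $M^*(T)=\min_XM(X,T)$. A deterministic algorithm $\mathcal{A}$ maps each $T$ to an allocation $X^{\mathcal{A},T}$. It is monotone if for any $T,T'$ differing only in row $i$, $\sum_j(X^{\mathcal{A},T}_{ij}-X^{\mathcal{A},T'}_{ij})(T_{ij}-T'_{ij})\le0$; task-independent if whenever $T_{ij}=T'_{ij}$ for $i=1,2$ and a given task $j$, then $X^{\mathcal{A},T}_{ij}=X^{\mathcal{A},T'}_{ij}$ for $i=1,2$; scale-free if $X^{\mathcal{A},\lambda T}=X^{\mathcal{A},T}$ for all $\lambda>0$. A randomized algorithm is a random choice of a deterministic algorithm; it is a randomized MIS algorithm if with probability one the chosen deterministic algorithm is monotone, task-independent and scale-free. Its worst-case expected approximation ratio is $\sup_{T}\mathbf{E}[M(X^{\mathcal{A},T},T)]/M^*(T)$. $\mathcal{P}_n$ is the set of Borel probability measures on $\mathbb{R}^n$ supported in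 $\mathbb{R}_{++}^n$; for $\mathbb{P}\in\mathcal{P}_n$, algorithm $\mathcal{A}^{\mathbb{P}}$ draws $\mathbf{z}\sim\mathbb{P}$ and sends task $j$ to machine 1 iff $T_{1j}/T_{2j}<z_j$ (else to machine 2); $R_n(\mathbb{P})$ denotes its worst-case expected approximation ratio. *)

From HB Require Import structures.
From mathcomp Require Import all_boot all_order all_algebra.
From mathcomp Require Import all_classical all_reals all_analysis.
Set Implicit Arguments. Unset Strict Implicit. Unset Printing Implicit Defensive.
Import Order.TTheory GRing.Theory Num.Theory.
Import numFieldNormedType.Exports.
Local Open Scope classical_set_scope.
Local Open Scope ring_scope.

Section Sched.
Variables (R : realType) (n : nat).

(* processing-time matrices: row 0 = machine 1, row 1 = machine 2 *)
Definition mat := 'M[R]_(2, n).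
Definition pos_mat (T : mat) : Prop := forall i j, 0 < T i j.

(* an allocation X in {0,1}^{2 x n} with X_1j + X_2j = 1 is encoded by the
   machine x j : 'I_2 receiving task j; X_ij = [x j == i] *)
Definition alloc := {ffun 'I_n -> 'I_2}.
Definition Xind (x : alloc) (i : 'I_2) (j : 'I_n) : R := (x j == i)%:R.

Definition load (x : alloc) (T : mat) (i : 'I_2) : R :=
  \sum_(j < n) Xind x i j * T i j.
Definition mach1 : 'I_2 := ord0.
Definition mach2 : 'I_2 := @Ordinal 2 1 isT.
Definition makespan (x : alloc) (T : mat) : R :=
  Num.max (load x T mach1) (load x T mach2).
Definition opt_makespan (T : mat) : R :=
  \big[Num.min/makespan [ffun=> mach1] T]_(x : alloc) makespan x T.

Definition det_alg := mat -> alloc.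

Definition monotone (A : det_alg) : Prop :=
  forall (T T' : mat) (i : 'I_2), pos_mat T -> pos_mat T' ->
    (forall (i' : 'I_2) (j : 'I_n), i' != i -> T i' j = T' i' j) ->
    \sum_(j < n) (Xind (A T) i j - Xind (A T') i j) * (T i j - T' i j) <= 0.

Definition task_independent (A : det_alg) : Prop :=
  forall (T T' : mat) (j : 'I_n), pos_mat T -> pos_mat T' ->
    (forall i : 'I_2, T i j = T' i j) ->
    forall i : 'I_2, Xind (A T) i j = Xind (A T') i j.

Definition scale_free (A : det_alg) : Prop :=
  forall (T : mat) (lam : R), pos_mat T -> 0 < lam -> A (lam *: T) = A T.

Definition MIS (A : det_alg) : Prop :=
  [/\ monotone A, task_independent A & scale_free A].

(* randomized algorithm: a probability space (Omega, P) and a random choice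
   omega |-> A omega of deterministic algorithm, such that for each instance
   the produced allocation is a random variable *)
Definition expected_makespan d (Omega : measurableType d)
  (P : probability Omega R) (A : Omega -> det_alg) (T : mat) : \bar R :=
  (\int[P]_w (makespan (A w T) T)%:E)%E.

Definition worst_ratio d (Omega : measurableType d)
  (P : probability Omega R) (A : Omega -> det_alg) : \bar R :=
  ereal_sup [set (expected_makespan P A T * (opt_makespan T)^-1%:E)%E
            | T in pos_mat].

Definition randomized_MIS d (Omega : measurableType d)
  (P : probability Omega R) (A : Omega -> det_alg) : Prop :=
  (forall (T : mat) (x : alloc), pos_mat T -> measurable [set w | A w T = x])
  /\ {ae P, forall w, MIS (A w)}.

(* the threshold algorithms A^P, z drawn from a Borel probability on R^n *)
Definition algP (z : n.-tuple R) : det_alg :=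
  fun T => [ffun j => if T mach1 j / T mach2 j < tnth z j then mach1 else mach2].

Definition in_Pn (P : probability (n.-tuple R) R) : Prop :=
  P [set z | forall j, 0 < tnth z j] = 1%E.

Definition R_n (P : probability (n.-tuple R) R) : \bar R := worst_ratio P algP.

End Sched.

From HB Require Import structures.
From mathcomp Require Import all_boot all_order all_algebra.
From mathcomp Require Import all_classical all_reals all_analysis.
From mathcomp Require Import measurable_realfun ring.
Set Implicit Arguments. Unset Strict Implicit. Unset Printing Implicit Defensive.
Import Order.TTheory GRing.Theory Num.Theory.
Import numFieldNormedType.Exports.
Local Open Scope classical_set_scope.
Local Open Scope ring_scope.

(** Every [A^P] is MIS, which gives one inequality. Conversely,
task independence and scale-freeness make a deterministic MIS algorithm decide
task [j] from the ratio [T_1j / T_2j] alone, and monotonicity makes the set of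
ratios sent to machine 1 down-closed: the algorithm is a threshold algorithm
except possibly at the threshold [z_j] itself. For a randomized MIS algorithm
with finite worst-case ratio [W], the thresholds are a.s. in [(0, +oo)]: if
[z_j = 0] or [z_j = +oo] with positive probability, one huge entry in column
[j] would give unbounded expected makespan while the optimum stays [<= n]. Let
[P] be the law of [z]. Running [A^P] on [T] agrees with the original algorithm
on [T] with row 1 scaled by [c > 1] unless some ratio [r_j] satisfies
[r_j < z_j <= c r_j], so its expected makespan is at most
[c W M^*(T) + (sum of T) * P(some r_j < z_j <= c r_j)], and the last
probability vanishes as [c] decreases to 1. *)

Section Makespan.
Variables (R : realType) (n : nat).
Implicit Types (T U : mat R n) (x : alloc n).

Lemma machP (i : 'I_2) : i = mach1 \/ i = mach2.
Proof. by case: i => [[|[|]]] //= ?; [left|right]; apply/val_inj. Qed.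

Lemma mach2_neq1 : (mach2 == mach1) = false. Proof. by []. Qed.

Lemma Xind_ge0 x i j : 0 <= Xind R x i j.
Proof. by rewrite /Xind; case: (_ == _). Qed.

Lemma Xind_le1 x i j : Xind R x i j <= 1.
Proof. by rewrite /Xind; case: (_ == _). Qed.

Lemma Xind_mach2 x j : Xind R x mach2 j = 1 - Xind R x mach1 j.
Proof.
rewrite /Xind; case: (machP (x j)) => ->; rewrite eqxx ?mach2_neq1 ?subr0 //.
by rewrite eq_sym mach2_neq1 subrr.
Qed.

Lemma Xind_mach1_inj x y j : Xind R x mach1 j = Xind R y mach1 j ->
  (x j == mach1) = (y j == mach1).
Proof.
rewrite /Xind; case: (x j == mach1); case: (y j == mach1) => //= /eqP;
  by rewrite ?oner_eq0 // eq_sym oner_eq0.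
Qed.

Definition nonneg_mat T := forall i j, 0 <= T i j.

Lemma pos_mat_nonneg T : pos_mat T -> nonneg_mat T.
Proof. by move=> pT i j; apply: ltW. Qed.

Definition total_time T := \sum_(j < n) T mach1 j + \sum_(j < n) T mach2 j.

Lemma total_time_ge0 T : nonneg_mat T -> 0 <= total_time T.
Proof. by move=> nT; apply: addr_ge0; apply: sumr_ge0. Qed.

Lemma load_ge0 x T i : nonneg_mat T -> 0 <= load x T i.
Proof. by move=> nT; apply: sumr_ge0 => j _; rewrite mulr_ge0 ?Xind_ge0. Qed.

Lemma load_le_row x T i : nonneg_mat T -> load x T i <= \sum_(j < n) T i j.
Proof.
by move=> nT; apply: ler_sum => j _; rewrite -[leRHS]mul1r ler_wpM2r ?Xind_le1.
Qed.

Lemma makespan_ge0 x T : nonneg_mat T -> 0 <= makespan x T.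
Proof. by move=> nT; rewrite /makespan le_max load_ge0. Qed.

Lemma makespan_le_total x T : nonneg_mat T -> makespan x T <= total_time T.
Proof.
move=> nT; have row_ge0 i : 0 <= \sum_(j < n) T i j by apply: sumr_ge0.
rewrite /makespan /total_time ge_max.
by rewrite !(le_trans (load_le_row _ _ nT)) ?lerDl ?lerDr.
Qed.

Lemma makespan_ge_entry x T j : nonneg_mat T -> T (x j) j <= makespan x T.
Proof.
move=> nT; have le_load : T (x j) j <= load x T (x j).
  rewrite /load (bigD1 j) //= /Xind eqxx mul1r lerDl.
  by apply: sumr_ge0 => k _; rewrite mulr_ge0 ?Xind_ge0.
by apply: le_trans le_load _; rewrite /makespan le_max; case: (machP (x j)) => ->;
  rewrite lexx ?orbT.
Qed.

Lemma le_makespan x T T' : nonneg_mat T -> (forall i j, T i j <= T' i j) ->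
  makespan x T <= makespan x T'.
Proof.
move=> nT le_TT'; rewrite /makespan.
by apply: le_max2; apply: ler_sum => j _; rewrite ler_wpM2l ?Xind_ge0.
Qed.

Lemma makespanZ x T c : 0 <= c -> makespan x (c *: T) = c * makespan x T.
Proof.
move=> c0; rewrite /makespan /load.
have loadZ i : \sum_(j < n) Xind R x i j * (c *: T) i j =
    c * \sum_(j < n) Xind R x i j * T i j.
  by rewrite mulr_sumr; apply: eq_bigr => j _; rewrite mxE; ring.
by rewrite !loadZ maxr_pMr.
Qed.

Lemma opt_makespan_le x T : opt_makespan T <= makespan x T.
Proof. by rewrite /opt_makespan (bigD1 x) //= ge_min lexx. Qed.

Lemma le_opt_makespan u T : (forall x, u <= makespan x T) -> u <= opt_makespan T.
Proof.
move=> le_u; rewrite /opt_makespan; elim/big_ind: _ => // a b ua ub.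
by rewrite le_min ua ub.
Qed.

Lemma opt_makespan_gt0 T : (0 < n)%N -> pos_mat T -> 0 < opt_makespan T.
Proof.
move=> n_gt0 pT; pose j : 'I_n := Ordinal n_gt0.
apply: (@lt_le_trans _ _ (Num.min (T mach1 j) (T mach2 j))); first by rewrite lt_min !pT.
apply: le_opt_makespan => x; apply: le_trans (makespan_ge_entry x j (pos_mat_nonneg pT)).
by rewrite ge_min; case: (machP (x j)) => ->; rewrite lexx ?orbT.
Qed.

Lemma opt_makespan_row1 U i : (forall j, U i j = 1) -> opt_makespan U <= n%:R.
Proof.
move=> U1; apply: le_trans (opt_makespan_le [ffun=> i] U) _.
have load_all i' : load [ffun=> i] U i' = if i' == i then n%:R else 0.
  rewrite /load /Xind; case: eqP => [->|/eqP ne].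
    under eq_bigr do rewrite ffunE eqxx mul1r U1.
    by rewrite sumr_const card_ord.
  by rewrite big1 // => j _; rewrite ffunE eq_sym (negbTE ne) mul0r.
rewrite /makespan ge_max !load_all.
by case: (mach1 == i); case: (mach2 == i); rewrite ?lexx ?ler0n.
Qed.

End Makespan.

Section MIS.
Variables (R : realType) (n : nat).
Implicit Types (T : mat R n) (x : alloc n) (A : det_alg R n).

Definition col_mat (j : 'I_n) (a b : R) : mat R n :=
  \matrix_(i, k) if k == j then (if i == mach1 then a else b) else 1.

Lemma col_mat_pos j a b : 0 < a -> 0 < b -> pos_mat (col_mat j a b).
Proof. by move=> a0 b0 i k; rewrite mxE; case: (k == j); case: (i == mach1). Qed.

Lemma col_mat1 j a b : col_mat j a b mach1 j = a.
Proof. by rewrite mxE !eqxx. Qed.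

Lemma col_mat2 j a b : col_mat j a b mach2 j = b.
Proof. by rewrite mxE eqxx mach2_neq1. Qed.

Definition scale_row1 (c : R) T : mat R n :=
  \matrix_(i, k) if i == mach1 then c * T i k else T i k.

Lemma scale_row1_pos c T : 0 < c -> pos_mat T -> pos_mat (scale_row1 c T).
Proof. by move=> c0 pT i k; rewrite mxE; case: (i == mach1); rewrite ?mulr_gt0. Qed.

Lemma scale_row1_ratio c T j :
  scale_row1 c T mach1 j / scale_row1 c T mach2 j = c * (T mach1 j / T mach2 j).
Proof. by rewrite !mxE eqxx mach2_neq1 mulrA. Qed.

Lemma makespan_scale_row1_ge x c T : 1 <= c -> nonneg_mat T ->
  makespan x T <= makespan x (scale_row1 c T).
Proof.
move=> c1 nT; apply: le_makespan => // i k; rewrite mxE.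
by case: (i == mach1); rewrite ?ler_peMl.
Qed.

Lemma opt_makespan_scale_row1 c T : 1 <= c -> nonneg_mat T ->
  opt_makespan (scale_row1 c T) <= c * opt_makespan T.
Proof.
move=> c1 nT; have c0 : 0 < c by apply: lt_le_trans c1.
rewrite -ler_pdivrMl //; apply: le_opt_makespan => x.
rewrite ler_pdivrMl // -makespanZ ?(ltW c0) //.
apply: le_trans (opt_makespan_le x _) _.
apply: le_makespan => i k; rewrite !mxE; have := nT i k; case: (i == mach1) => //.
  by move=> Tik; rewrite mulr_ge0 ?(ltW c0).
by move=> Tik; rewrite ler_peMl.
Qed.

Definition mach1_at A (j : 'I_n) (r : R) : bool := A (col_mat j r 1) j == mach1.

Lemma MIS_mach1_ratio A T j : MIS A -> pos_mat T ->
  (A T j == mach1) = mach1_at A j (T mach1 j / T mach2 j).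
Proof.
move=> [_ indep scale] pT; have t2_gt0 := pT mach2 j.
have pT' : pos_mat ((T mach2 j)^-1 *: T).
  by move=> i k; rewrite mxE mulr_gt0 ?invr_gt0.
rewrite -(scale T (T mach2 j)^-1 pT) ?invr_gt0 //.
apply: Xind_mach1_inj; apply: indep => //; first by apply: col_mat_pos; rewrite ?divr_gt0.
move=> i; case: (machP i) => ->; first by rewrite col_mat1 mxE mulrC.
by rewrite col_mat2 mxE mulVf ?gt_eqF.
Qed.

Lemma MIS_mach1_at_down A j r s : MIS A -> 0 < r -> r < s ->
  mach1_at A j s -> mach1_at A j r.
Proof.
move=> [mono _ _] r_gt0 rs; have s_gt0 := lt_trans r_gt0 rs.
have row2_eq i k : i != mach1 -> col_mat j s 1 i k = col_mat j r 1 i k.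
  by move=> ne; rewrite !mxE (negbTE ne).
have := mono _ _ mach1 (col_mat_pos j s_gt0 ltr01) (col_mat_pos j r_gt0 ltr01) row2_eq.
rewrite (bigD1 j) //= big1 ?addr0 => [|k /negbTE kj]; last by rewrite !mxE kj subrr mulr0.
rewrite !col_mat1 /mach1_at /Xind => + Hs; rewrite (eqP Hs) eqxx.
by case: (_ == mach1) => //; rewrite subr0 mul1r subr_le0 leNgt rs.
Qed.

Lemma ltr_indicator_antitone (u u' v v' z : R) : (u <= u' <-> v <= v') ->
  (((u < z)%R : bool)%:R - ((u' < z)%R : bool)%:R) * (v - v') <= 0.
Proof.
move=> uv; have [vv'|v'v] := leP v v'.
  have uu' := proj2 uv vv'; apply: mulr_ge0_le0; last by rewrite subr_le0.
  rewrite subr_ge0 ler_nat.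
  by case: (ltP u' z) => [/(le_lt_trans uu') ->|]; case: (u < z).
have u'u : u' < u by rewrite ltNge; apply/negP => /uv; rewrite leNgt v'v.
apply: mulr_le0_ge0; last by rewrite subr_ge0 ltW.
rewrite subr_le0 ler_nat.
by case: (ltP u z) => [/(lt_trans u'u) ->|]; case: (u' < z).
Qed.

Lemma Xind_algP z T j :
  Xind R (algP z T) mach1 j = ((T mach1 j / T mach2 j < tnth z j)%R : bool)%:R.
Proof. by rewrite /Xind /algP ffunE; case: (_ < _). Qed.

Lemma algP_MIS (z : n.-tuple R) : MIS (algP z).
Proof.
split.
- move=> T T' i pT pT' eqT; apply: sumr_le0 => j _.
  case: (machP i) => -> in eqT *.
    rewrite !Xind_algP -(eqT mach2 j) //; apply: ltr_indicator_antitone.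
    by rewrite ler_pM2r ?invr_gt0.
  rewrite !Xind_mach2 !Xind_algP -(eqT mach1 j) //.
  rewrite (_ : forall a b c : R, (1 - a - (1 - b)) * c = (b - a) * c); last first.
    by move=> *; ring.
  by apply: ltr_indicator_antitone; rewrite ler_pM2l // lef_pV2 ?posrE.
- by move=> T T' j pT pT' eqT i; rewrite /Xind /algP !ffunE !eqT.
- move=> T lam pT lam_gt0; apply/ffunP => j; rewrite /algP !ffunE !mxE.
  by rewrite -mulf_div divff ?mul1r ?gt_eqF.
Qed.

End MIS.

Lemma measurable_fun_finite_fibers d d' (T : measurableType d)
    (U : measurableType d') (F : finType) (g : T -> F) (h : F -> U) :
  (forall a, measurable [set w | g w = a]) -> measurable_fun setT (h \o g).
Proof.
move=> mg _ B mB; rewrite setTI.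
have -> : (h \o g) @^-1` B = \bigcup_a [set w | g w = a /\ B (h a)].
  by apply/seteqP; split => [w Bw|w [a _ [<-]]] //; exists (g w).
apply: countable_bigcupT_measurable => // a.
have [Bha|nBha] := pselect (B (h a)).
  rewrite (_ : [set w | _] = [set w | g w = a]) //.
  by apply/seteqP; split => w /= => [[]|] //; split.
by rewrite (_ : [set w | _] = set0) //; apply/seteqP; split => w //= [].
Qed.

Lemma countable_bigcapT_measurable d (T : measurableType d) (I : countType)
    (F : I -> set T) :
  (forall i, measurable (F i)) -> measurable (\bigcap_i F i).
Proof.
move=> mF; rewrite -[X in measurable X]setCK setC_bigcap; apply: measurableC.
by apply: countable_bigcupT_measurable => // i; exact: measurableC.
Qed.

Lemma measurable_algP_fiber (R : realType) (n : nat) (T : mat R n) (x : alloc n) :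
  measurable [set z : n.-tuple R | algP z T = x].
Proof.
have -> : [set z : n.-tuple R | algP z T = x] = \bigcap_j
    [set z : n.-tuple R | (T mach1 j / T mach2 j < tnth z j) = (x j == mach1)].
  apply/seteqP; split => z /= => [<- j|eq_x]; first by rewrite /algP ffunE; case: ifP.
  by apply/ffunP => j; rewrite /algP ffunE (eq_x j I); case: (machP (x j)) => ->.
apply: countable_bigcapT_measurable => j.
have := @measurable_tnth _ _ n j measurableT _
  (@measurable_itv _ `]T mach1 j / T mach2 j, +oo[).
rewrite setTI; set S := _ @^-1` _ => mS.
have S_lt z : S z = (T mach1 j / T mach2 j < tnth z j).
  by rewrite /S /= in_itv /= andbT.
case: (x j == mach1).
  by rewrite (_ : [set z | _] = S) //; apply/seteqP; split => z /=; rewrite S_lt.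
rewrite (_ : [set z | _] = ~` S); first exact: measurableC.
by apply/seteqP; split => z /=; rewrite S_lt; [move=> ->|move/negP/negbTE].
Qed.

Lemma algP_randomized_MIS (R : realType) (n : nat) (P : probability (n.-tuple R) R) :
  randomized_MIS P (@algP R n).
Proof.
split; first by move=> T x _; exact: measurable_algP_fiber.
by apply: aeW => z; exact: algP_MIS.
Qed.

Section Threshold.
Variable R : realType.

Definition rat_enum (k : nat) : R :=
  if @choice.unpickle rat k is Some q then ratr q else 0.

Lemma rat_enum_dense (a b : R) : a < b -> exists k, a < rat_enum k < b.
Proof.
move=> ab; have [q] := rat_in_itvoo ab; rewrite in_itv /= => q_ab.
by exists (choice.pickle q); rewrite /rat_enum choice.pickleK.
Qed.

Definition threshold_seq (D : R -> bool) (k : nat) : \bar R :=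
  if (0 < rat_enum k) && D (rat_enum k) then (rat_enum k)%:E else 0%E.

(* A supremum over the rationals keeps [threshold] measurable in [D]; for [D]
   down-closed on [(0, +oo)] it is the supremum of [D] on [(0, +oo)]. *)
Definition threshold (D : R -> bool) : \bar R := esups (threshold_seq D) 0.

Lemma threshold_seq_le D k : (threshold_seq D k <= threshold D)%E.
Proof. by apply: ereal_sup_ubound; exists k. Qed.

Lemma threshold_ge0 D : (0 <= threshold D)%E.
Proof.
apply: le_trans (threshold_seq_le D 0).
by rewrite /threshold_seq; case: ifP => // /andP[/ltW]; rewrite lee_fin.
Qed.

Variable D : R -> bool.
Hypothesis D_down : forall r s, 0 < r -> r < s -> D s -> D r.

Lemma lt_threshold r : 0 < r -> (r%:E < threshold D)%E -> D r.
Proof.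
move=> r_gt0 /ereal_sup_gt[_ [k _ <-]]; rewrite /threshold_seq.
case: ifP => [/andP[_ Dq]|_]; last by rewrite lte_fin ltNge (ltW r_gt0).
by rewrite lte_fin => rq; apply: D_down Dq.
Qed.

Lemma threshold_ge s : 0 < s -> D s -> (s%:E <= threshold D)%E.
Proof.
move=> s_gt0 Ds; rewrite leNgt; apply/negP => lt_s.
have fin_thr : threshold D \is a fin_num.
  by rewrite ge0_fin_numE ?threshold_ge0 // (lt_trans lt_s) ?ltry.
have thr_s : fine (threshold D) < s by rewrite -lte_fin fineK.
have [k /andP[thr_q q_s]] := rat_enum_dense thr_s.
have q_gt0 : 0 < rat_enum k by apply: le_lt_trans thr_q; rewrite fine_ge0 ?threshold_ge0.
have := threshold_seq_le D k; rewrite /threshold_seq q_gt0 (D_down q_gt0 q_s Ds) /=.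
by rewrite -(fineK fin_thr) lee_fin leNgt thr_q.
Qed.

End Threshold.

Lemma measurable_threshold (R : realType) d (Omega : measurableType d)
    (D : Omega -> R -> bool) :
  (forall r, 0 < r -> measurable_fun setT (D^~ r)) ->
  measurable_fun setT (fun w => threshold (D w)).
Proof.
move=> mD; apply: (measurable_fun_esups (f := fun k w => threshold_seq (D w) k)) => k.
rewrite /threshold_seq.
have [q_gt0|_] := boolP (0 < rat_enum R k); last exact: measurable_cst.
exact: measurable_fun_ifT (mD _ q_gt0) (measurable_cst _) (measurable_cst _).
Qed.

Section MISThreshold.
Variables (R : realType) (n : nat) (B : det_alg R n).
Hypothesis B_MIS : MIS B.

Lemma MIS_lt_threshold j r : 0 < r ->
  (r%:E < threshold (mach1_at B j))%E -> mach1_at B j r.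
Proof. by apply: lt_threshold => r' s'; exact: MIS_mach1_at_down. Qed.

Lemma MIS_threshold_ge j s : 0 < s -> mach1_at B j s ->
  (s%:E <= threshold (mach1_at B j))%E.
Proof. by apply: threshold_ge => r' s'; exact: MIS_mach1_at_down. Qed.

(* At the scaled ratio [c r], [c > 1], the decision of [B] is read off [z]
   unless [r < z_j <= c r]; this avoids the ambiguity exactly at thresholds. *)
Lemma MIS_threshold_scale_row1 (z : n.-tuple R) (T : mat R n) c :
  (forall j, (tnth z j)%:E = threshold (mach1_at B j)) -> pos_mat T -> 1 < c ->
  (forall j, ~~ (T mach1 j / T mach2 j < tnth z j <= c * (T mach1 j / T mach2 j))) ->
  algP z T = B (scale_row1 c T).
Proof.
move=> z_thr pT c_gt1 no_window; apply/ffunP => j; rewrite /algP ffunE.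
have := no_window j; set r := T mach1 j / T mach2 j => window_j.
have r_gt0 : 0 < r by rewrite divr_gt0.
have cr_gt0 : 0 < c * r by rewrite mulr_gt0 // (lt_trans ltr01).
have := MIS_mach1_ratio j B_MIS (scale_row1_pos (lt_trans ltr01 c_gt1) pT).
rewrite scale_row1_ratio -/r; case: ltP => [r_z|z_r] B_cr.
  apply/esym/eqP; rewrite B_cr; apply: MIS_lt_threshold => //.
  by rewrite -z_thr lte_fin ltNge; move: window_j; rewrite r_z.
case: (machP (B (scale_row1 c T) j)) => // B1; exfalso.
have /(MIS_threshold_ge cr_gt0) : mach1_at B j (c * r) by rewrite -B_cr B1.
by rewrite -z_thr lee_fin leNgt (le_lt_trans z_r) // ltr_pMl.
Qed.

End MISThreshold.

Lemma cvg_one_add_harmonic (R : realType) :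
  (fun k => 1 + harmonic k) @ \oo --> (1 : R).
Proof.
by rewrite -[X in _ --> X]addr0; apply: cvgD; [exact: cvg_cst|exact: cvg_harmonic].
Qed.

Section ThresholdLaw.
Variables (R : realType) (n : nat) (d : measure_display) (Omega : measurableType d)
  (P : probability Omega R) (A : Omega -> det_alg R n).
Hypothesis mA : forall T x, pos_mat T -> measurable [set w | A w T = x].
Hypothesis A_MIS : {ae P, forall w, MIS (A w)}.
Hypothesis n_gt0 : (0 < n)%N.

Local Notation W := (worst_ratio P A).

Lemma measurable_makespan_alg T : pos_mat T ->
  measurable_fun setT (fun w => (makespan (A w T) T)%:E).
Proof.
move=> pT; apply: (measurable_fun_finite_fibers (g := A^~ T)
  (fun x => (makespan x T)%:E)) => x.
exact: mA.
Qed.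

Lemma expected_makespan_ge0 T : pos_mat T -> (0 <= expected_makespan P A T)%E.
Proof.
move=> pT; apply: integral_ge0 => w _; rewrite lee_fin.
exact: makespan_ge0 (pos_mat_nonneg pT).
Qed.

Lemma expected_ratio_le_worst T : pos_mat T ->
  (expected_makespan P A T * (opt_makespan T)^-1%:E <= W)%E.
Proof. by move=> pT; apply: ereal_sup_ubound; exists T. Qed.

Lemma worst_ratio_ge0 : (0 <= W)%E.
Proof.
have p1 : pos_mat (const_mx 1 : mat R n) by move=> i j; rewrite mxE.
apply: le_trans (expected_ratio_le_worst p1).
by rewrite mule_ge0 ?expected_makespan_ge0 // lee_fin invr_ge0 ltW ?opt_makespan_gt0.
Qed.

Variable w0 : R.
Hypothesis W_w0 : W = w0%:E.

Lemma w0_ge0 : 0 <= w0.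
Proof. by rewrite -lee_fin -W_w0 worst_ratio_ge0. Qed.

Lemma expected_makespan_le T : pos_mat T ->
  (expected_makespan P A T <= (w0 * opt_makespan T)%:E)%E.
Proof.
move=> pT; have opt_gt0 := opt_makespan_gt0 n_gt0 pT.
have := expected_ratio_le_worst pT; rewrite W_w0.
have := expected_makespan_ge0 pT; case: (expected_makespan P A T) => [e| |] //.
  by rewrite !lee_fin => _; rewrite ler_pdivrMr.
by move=> _; rewrite gt0_mulye ?lte_fin ?invr_gt0 // leye_eq.
Qed.

Lemma measure_le_expected_makespan (E : set Omega) U t : measurable E ->
  pos_mat U -> 0 <= t -> {ae P, forall w, E w -> t <= makespan (A w U) U} ->
  (t%:E * P E <= expected_makespan P A U)%E.
Proof.
move=> mE pU t_ge0 ae_t; rewrite -[in P E](setIT E) -integral_indic //.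
rewrite -ge0_integralZl_EFin //; last first.
  by apply/measurable_EFinP; exact: measurable_indic.
apply: ae_ge0_le_integral => //.
- by move=> w _; rewrite -EFinM lee_fin mulr_ge0 // indicE ler0n.
- apply/measurable_EFinP; apply: measurable_funM; first exact: measurable_cst.
  exact: measurable_indic.
- by move=> w _; rewrite lee_fin; exact: makespan_ge0 (pos_mat_nonneg pU).
- exact: measurable_makespan_alg.
apply: filterS ae_t => w t_le _; rewrite -EFinM lee_fin indicE.
have [/set_mem/t_le t_le_w|_] := boolP (w \in E); first by rewrite mulr1.
by rewrite mulr0; exact: makespan_ge0 (pos_mat_nonneg pU).
Qed.

(* [t P(E) <= W M^*(U) <= W n] for every [t] *)
Lemma ae_not_unbounded_makespan (E : set Omega) : measurable E ->
  (forall t, 0 < t -> exists2 U, pos_mat U /\ opt_makespan U <= n%:R &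
     {ae P, forall w, E w -> t <= makespan (A w U) U}) ->
  {ae P, forall w, ~ E w}.
Proof.
move=> mE unbounded; exists E; split => // [|w /= /contrapT //].
have finE : P E \is a fin_num.
  by rewrite ge0_fin_numE // (le_lt_trans (probability_le1 P mE)) ?ltry.
have PE_bound t : 0 < t -> t * fine (P E) <= w0 * n%:R.
  move=> t_gt0; have [U [pU optU] ae_t] := unbounded t t_gt0.
  rewrite -lee_fin EFinM fineK //.
  apply: le_trans (measure_le_expected_makespan mE pU (ltW t_gt0) ae_t) _.
  apply: le_trans (expected_makespan_le pU) _.
  by rewrite lee_fin ler_wpM2l ?w0_ge0.
suff PE_le0 : fine (P E) <= 0.
  by apply/eqP; rewrite -(fineK finE) eqe eq_le PE_le0 fine_ge0.
rewrite leNgt; apply/negP => PE_gt0.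
have bound_gt0 : 0 < w0 * n%:R + 1 by rewrite ltr_wpDl ?mulr_ge0 ?w0_ge0.
have := PE_bound _ (divr_gt0 bound_gt0 PE_gt0).
by rewrite mulrVK ?unitfE ?gt_eqF // gerDl ler10.
Qed.

Definition thr (j : 'I_n) w : \bar R := threshold (mach1_at (A w) j).

Lemma measurable_thr j : measurable_fun setT (thr j).
Proof.
apply: measurable_threshold => r r_gt0.
apply: (measurable_fun_finite_fibers (g := A^~ (col_mat j r 1))
  (fun x => x j == mach1)) => x.
by apply: mA; apply: col_mat_pos.
Qed.

Lemma ae_thr_gt0 j : {ae P, forall w, (0 < thr j w)%E}.
Proof.
have mE : measurable [set w | (thr j w <= 0)%E].
  by rewrite -[X in measurable X]setTI; apply: measurable_lee => //; exact: measurable_thr.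
apply: filterS (ae_not_unbounded_makespan mE _) => [w|t t_gt0].
  by rewrite /= ltNge => /negP.
have pU := col_mat_pos j ltr01 t_gt0.
exists (col_mat j 1 t).
  split=> //; apply: (@opt_makespan_row1 _ _ _ mach1) => k.
  by rewrite mxE eqxx; case: (k == j).
apply: filterS A_MIS => w mis thr_le0.
have := makespan_ge_entry (A w (col_mat j 1 t)) j (pos_mat_nonneg pU).
case: (machP (A w (col_mat j 1 t) j)) => [Aj|->]; last by rewrite col_mat2.
have := MIS_mach1_ratio j mis pU; rewrite Aj eqxx col_mat1 col_mat2 => /esym Aj1.
have := MIS_threshold_ge mis (divr_gt0 ltr01 t_gt0) Aj1.
by move=> /le_trans /(_ thr_le0); rewrite lee_fin leNgt divr_gt0.
Qed.

Lemma ae_thr_lty j : {ae P, forall w, (thr j w < +oo)%E}.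
Proof.
have mE : measurable [set w | (+oo <= thr j w)%E].
  by rewrite -[X in measurable X]setTI; apply: measurable_lee => //; exact: measurable_thr.
apply: filterS (ae_not_unbounded_makespan mE _) => [w|t t_gt0].
  by rewrite /= ltNge => /negP.
have pU := col_mat_pos j t_gt0 ltr01.
exists (col_mat j t 1).
  split=> //; apply: (@opt_makespan_row1 _ _ _ mach2) => k.
  by rewrite mxE mach2_neq1; case: (k == j).
apply: filterS A_MIS => w mis thr_infty.
have mach1_t : mach1_at (A w) j t.
  by apply: MIS_lt_threshold => //; apply: lt_le_trans thr_infty; rewrite ltry.
have := MIS_mach1_ratio j mis pU; rewrite col_mat1 col_mat2 divr1 mach1_t => /eqP Aj.
have := makespan_ge_entry (A w (col_mat j t 1)) j (pos_mat_nonneg pU).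
by rewrite Aj col_mat1.
Qed.

(* [thr j] with the null events [thr j = 0] and [thr j = +oo] sent to [1] *)
Definition zthr j w : R :=
  if (0 < thr j w)%E && (thr j w < +oo)%E then fine (thr j w) else 1.

Lemma zthr_gt0 j w : 0 < zthr j w.
Proof. by rewrite /zthr; case: ifP => // /fine_gt0. Qed.

Lemma measurable_zthr j : measurable_fun setT (zthr j).
Proof.
apply: measurable_fun_ifT; last exact: measurable_cst.
  by apply: measurable_and; apply: measurable_fun_lte => //; exact: measurable_thr.
exact: measurableT_comp (fine_measurable measurableT) (measurable_thr j).
Qed.

Lemma ae_zthr : {ae P, forall w, MIS (A w) /\ forall j, (zthr j w)%:E = thr j w}.
Proof.
have ae_fin : {ae P, forall w, forall j, (zthr j w)%:E = thr j w}.
  apply: filter_forall => j.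
  apply: filterS2 (ae_thr_gt0 j) (ae_thr_lty j) => w thr_gt0 thr_lty.
  by rewrite /zthr thr_gt0 thr_lty /= fineK // ge0_fin_numE ?thr_lty ?ltW.
by apply: filterS2 A_MIS ae_fin => w; split.
Qed.

Definition zthr_vec w : n.-tuple R := [tuple zthr j w | j < n].

Lemma measurable_zthr_vec : measurable_fun setT zthr_vec.
Proof.
apply/measurable_fun_tnthP => j.
rewrite (_ : _ \o _ = zthr j); first exact: measurable_zthr.
by apply/funext => w; rewrite /= tnth_mktuple.
Qed.

Definition zthr_mfun : {mfun Omega >-> n.-tuple R} :=
  HB.pack zthr_vec (isMeasurableFun.Build _ _ _ _ _ measurable_zthr_vec).

Definition threshold_law := distribution P zthr_mfun.

Lemma threshold_law_in_Pn : in_Pn threshold_law.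
Proof.
rewrite /in_Pn /threshold_law /distribution /pushforward -(probability_setT P).
by congr (P _); apply/seteqP; split => w //= _ j; rewrite tnth_mktuple zthr_gt0.
Qed.

Section FixedInstance.
Variable T : mat R n.
Hypothesis pT : pos_mat T.

Local Notation ratio j := (T mach1 j / T mach2 j).

Definition window c := \bigcup_j [set w | ratio j < zthr j w <= c * ratio j].

Lemma measurable_window c : measurable (window c).
Proof.
apply: countable_bigcupT_measurable => // j.
have := measurable_zthr j measurableT (measurable_itv `]ratio j, c * ratio j]).
by rewrite setTI; congr measurable; apply/seteqP; split => w; rewrite /= in_itv.
Qed.

Lemma measurable_threshold_makespan :
  measurable_fun setT (fun w => (makespan (algP (zthr_vec w) T) T)%:E).
Proof.
apply: (measurable_fun_finite_fibers (g := fun w => algP (zthr_vec w) T)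
  (fun x => (makespan x T)%:E)) => x.
have := measurable_zthr_vec measurableT (measurable_algP_fiber T x).
by rewrite setTI; congr measurable.
Qed.

Lemma ae_threshold_makespan_le c : 1 < c -> {ae P, forall w,
  makespan (algP (zthr_vec w) T) T <=
  makespan (A w (scale_row1 c T)) (scale_row1 c T) + total_time T * \1_(window c) w}.
Proof.
move=> c_gt1; have nT := pos_mat_nonneg pT.
have nTc := pos_mat_nonneg (scale_row1_pos (lt_trans ltr01 c_gt1) pT).
apply: filterS ae_zthr => w [mis z_thr]; rewrite indicE.
have [win|nwin] := pselect (window c w).
  rewrite mem_set // mulr1; apply: le_trans (makespan_le_total _ nT) _.
  by rewrite lerDr; exact: makespan_ge0 nTc.
rewrite memNset // mulr0 addr0 (MIS_threshold_scale_row1 mis _ pT c_gt1).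
- exact: makespan_scale_row1_ge (ltW c_gt1) nT.
- by move=> j; rewrite tnth_mktuple.
move=> j; apply/negP => win_j; apply: nwin; exists j => //.
by rewrite /= -(tnth_mktuple (zthr^~ w) j).
Qed.

Lemma expected_threshold_makespan_le c : 1 < c ->
  (\int[P]_w (makespan (algP (zthr_vec w) T) T)%:E <=
   (w0 * (c * opt_makespan T) + total_time T * fine (P (window c)))%:E)%E.
Proof.
move=> c_gt1; have pTc := scale_row1_pos (lt_trans ltr01 c_gt1) pT.
have tt_ge0 := total_time_ge0 (pos_mat_nonneg pT).
have mwin := measurable_window c.
have mindic : measurable_fun setT (fun w => (total_time T)%:E * (\1_(window c) w)%:E)%E.
  apply: emeasurable_funM; first exact: measurable_cst.
  by apply/measurable_EFinP; exact: measurable_indic.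
have msc := measurable_makespan_alg pTc.
have sc_ge0 : forall w, setT w ->
    (0 <= (makespan (A w (scale_row1 c T)) (scale_row1 c T))%:E)%E.
  by move=> w _; rewrite lee_fin; exact: makespan_ge0 (pos_mat_nonneg pTc).
have indic_ge0 : forall w, setT w -> (0 <= (total_time T)%:E * (\1_(window c) w)%:E)%E.
  by move=> w _; rewrite -EFinM lee_fin mulr_ge0 // indicE ler0n.
apply: (@le_trans _ _ (\int[P]_w ((makespan (A w (scale_row1 c T)) (scale_row1 c T))%:E
    + (total_time T)%:E * (\1_(window c) w)%:E))%E).
  apply: ae_ge0_le_integral => //.
  - by move=> w _; rewrite lee_fin; exact: makespan_ge0 (pos_mat_nonneg pT).
  - exact: measurable_threshold_makespan.
  - by move=> w _; rewrite adde_ge0 ?sc_ge0 ?indic_ge0.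
  - exact: emeasurable_funD.
  apply: filterS (ae_threshold_makespan_le c_gt1) => w le_w _.
  by rewrite -EFinM -EFinD lee_fin.
rewrite ge0_integralD // ge0_integralZl_EFin //; last first.
  by apply/measurable_EFinP; exact: measurable_indic.
have fin_win : P (window c) \is a fin_num.
  by rewrite ge0_fin_numE // (le_lt_trans (probability_le1 P mwin)) ?ltry.
rewrite integral_indic // setIT (EFinD (w0 * _)) (EFinM (total_time T)) fineK //.
apply: leeD => //; apply: le_trans (expected_makespan_le pTc) _.
rewrite lee_fin ler_wpM2l ?w0_ge0 //.
exact: opt_makespan_scale_row1 (ltW c_gt1) (pos_mat_nonneg pT).
Qed.

Lemma window_cvg0 :
  (fun k => fine (P (window (1 + harmonic k)))) @ \oo --> 0.
Proof.
have window_noninc : nonincreasing_seq (fun k => window (1 + harmonic k)).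
  move=> k k' le_kk'; apply/subsetPset => w [j _ /andP[rz zcr]]; exists j => //.
  have r_ge0 : 0 <= ratio j := ltW (divr_gt0 (pT _ _) (pT _ _)).
  rewrite /= rz (le_trans zcr) // ler_wpM2r // lerD2l /=.
  by rewrite lef_pV2 ?posrE // ler_nat ltnS.
have window_cap : \bigcap_k window (1 + harmonic k) = set0.
  apply/seteqP; split => // w win_all.
  have : \forall k \near \oo, forall j,
      ~~ (ratio j < zthr j w <= (1 + harmonic k) * ratio j).
    apply: filter_forall => j.
    have [rz|zr] := ltP (ratio j) (zthr j w); last exact: nearW.
    have cr_cvg : (fun k => (1 + harmonic k) * ratio j) @ \oo --> ratio j.
      rewrite -[X in _ --> X]mul1r.
      by apply: cvgM; [exact: cvg_one_add_harmonic|exact: cvg_cst].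
    move/cvgr_lt: cr_cvg => /(_ _ rz).
    by apply: filterS => k crz; rewrite /= -ltNge.
  move=> /filter_ex[k nowin]; have [j _ win_j] := win_all k I.
  by move: (nowin j); rewrite win_j.
have := nonincreasing_cvg_mu (mu := P) _ (fun k => measurable_window _) _ window_noninc.
rewrite window_cap measure0 => /(_ _ _)/wrap[||/fine_cvg //].
- by rewrite (le_lt_trans (probability_le1 P (measurable_window _))) ?ltry.
- exact: measurable0.
Qed.

Lemma expected_threshold_makespan_le_opt :
  (\int[P]_w (makespan (algP (zthr_vec w) T) T)%:E <= (w0 * opt_makespan T)%:E)%E.
Proof.
pose u k := w0 * ((1 + harmonic k) * opt_makespan T)
  + total_time T * fine (P (window (1 + harmonic k))).
have u_cvg : u @ \oo --> w0 * opt_makespan T.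
  rewrite -[X in _ --> X]addr0 -(mulr0 (total_time T)).
  apply: cvgD; apply: cvgM; try exact: cvg_cst; last exact: window_cvg0.
  rewrite -[X in _ --> X]mul1r.
  by apply: cvgM; [exact: cvg_one_add_harmonic|exact: cvg_cst].
apply/lee_addgt0Pr => e e_gt0.
have opt_lt : w0 * opt_makespan T < w0 * opt_makespan T + e by rewrite ltrDl.
move/cvgr_lt: u_cvg => /(_ _ opt_lt) /filter_ex[k uk].
have c_gt1 : 1 < 1 + harmonic k :> R by rewrite ltrDl harmonic_gt0.
apply: le_trans (expected_threshold_makespan_le c_gt1) _.
by rewrite -EFinD lee_fin ltW.
Qed.

End FixedInstance.

Lemma threshold_law_ratio_le : (R_n threshold_law <= W)%E.
Proof.
rewrite W_w0; apply: ge_ereal_sup => _ [T pT <-].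
have opt_gt0 := opt_makespan_gt0 n_gt0 pT.
rewrite /expected_makespan /threshold_law ge0_integral_distribution; first last.
- by move=> z; rewrite lee_fin; exact: makespan_ge0 (pos_mat_nonneg pT).
- apply: (measurable_fun_finite_fibers (g := fun z => algP z T)
    (fun x => (makespan x T)%:E)) => x.
  exact: measurable_algP_fiber.
apply: le_trans (lee_wpmul2r _ (expected_threshold_makespan_le_opt pT)) _.
  by rewrite lee_fin invr_ge0 ltW.
by rewrite -EFinM mulrK // unitfE gt_eqF.
Qed.

End ThresholdLaw.

Theorem corollary1 (R : realType) (n : nat) : (1 <= n)%N ->
  ereal_inf [set r : \bar R | exists (d : measure_display)
      (Omega : measurableType d) (P : probability Omega R)
      (A : Omega -> det_alg R n),
      randomized_MIS P A /\ r = worst_ratio P A]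
  = ereal_inf [set R_n P | P in @in_Pn R n].
Proof.
move=> n_gt0; apply/le_anti/andP; split.
  apply: ereal_inf_le_tmp => _ [P _ <-].
  by exists _, _, P, (@algP R n); split; [exact: algP_randomized_MIS|].
apply: le_ereal_inf_tmp => _ [d [Om [P [A [[mA A_MIS] ->]]]]].
case W_w0: (worst_ratio P A) => [w0| |]; last 2 first.
- by rewrite leey.
- by have := worst_ratio_ge0 P A n_gt0; rewrite W_w0.
apply: le_trans (ereal_inf_lbound _) _.
  by exists (threshold_law P mA); [exact: threshold_law_in_Pn|].
by rewrite -W_w0; exact: (threshold_law_ratio_le mA A_MIS n_gt0 W_w0).
Qed.
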